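(* Let $X$ be a topological space and let $\kappa,\mu\in\mathrm{MG}(X)$ be cardinals with $\kappa<\mu$. Assume that either (1) $\kappa=1$ and $\omega_0<\mu$, or (2) $\omega_0\le\kappa$. Then $X$ is discrete.
   Context: A linearly ordered Abelian group is an Abelian group with a linear order compatible with addition. For $x,y\in G_{>0}$, $x\asymp y$ iff $y\le nx$ and $x\le my$ for some $n,m\in\mathbb{Z}_{\ge1}$; $\mathrm{Arc}(G)=G_{>0}/\asymp$, ordered by $[x]\preceq[y]$ iff ($nx<y$ for all $n$) or $x\asymp y$; $\mathrm{Arc}(G)^\perp$ is $\mathrm{Arc}(G)$ with a new least element adjoined. For a bottomed linearly ordered set $S$ (least element $\perp_S$, $S^*=S\setminus\{\perp_S\}$), $\chi(S)$ is the least cardinal $\kappa>0$ such that some strictly decreasing family $(s_\alpha)_{\alpha<\kappa}$ in $S^*$ has every $t\in S^*$ bounded below by some $s_\alpha$. A $G$-metric on $X$: $d\colon X^2\to G$ with $d(x,y)=0\iff x=y$, $d\ge0$, symmetric, triangle inequality; $\mathrm{Met}(X;G)$ is the set of $G$-metrics generating the topology of $X$ via open balls of radii in $G_{>0}$. $\kappa\in\mathrm{MG}(X)$ iff some linearly ordered Abelian group $G$ with $\chi(\mathrm{Arc}(G)^\perp)=\kappa$ has $\mathrm{Met}(X;G)\ne\emptyset$. *)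

From HB Require Import structures.
From mathcomp Require Import all_boot all_algebra.
From mathcomp Require Import classical_sets topology.
Set Implicit Arguments. Unset Strict Implicit. Unset Printing Implicit Defensive.
Import GRing.Theory.
Local Open Scope ring_scope.
Local Open Scope classical_set_scope.

(** * Cardinal comparison of types (cardinals represented by types) *)
Definition card_le (A B : Type) : Prop := exists f : A -> B, injective f.
Definition card_eq (A B : Type) : Prop := exists f : A -> B, bijective f.
Definition card_lt (A B : Type) : Prop := card_le A B /\ ~ card_le B A.

Definition is_LOAG (G : zmodType) (le : G -> G -> Prop) : Prop :=
  [/\ (forall x, le x x),
      (forall x y, le x y -> le y x -> x = y),
      (forall x y z, le x y -> le y z -> le x z),
      (forall x y, le x y \/ le y x) &
      (forall x y z, le x y -> le (x + z) (y + z))].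

Section Arch.
Variables (G : zmodType) (le : G -> G -> Prop).
Definition glt (x y : G) : Prop := le x y /\ x <> y.
Definition gpos (x : G) : Prop := glt 0 x.
Definition asymp (x y : G) : Prop :=
  exists n m : nat, [/\ (1 <= n)%N, (1 <= m)%N, le y (x *+ n) & le x (y *+ m)].
(** Arc(G) = G_{>0} / ≍ , equivalence classes represented as sets *)
Definition Arc : Type :=
  {A : G -> Prop | exists x, gpos x /\ A = (fun y => gpos y /\ asymp x y)}.
Definition arc_le (A B : Arc) : Prop :=
  exists x y, [/\ sval A x, sval B y &
     ((forall n : nat, glt (x *+ n) y) \/ asymp x y)].
(** Arc(G)^⊥ : adjoin a new least element (None) *)
Definition arc_bot_le (a b : option Arc) : Prop :=
  match a, b with
  | None, _ => True
  | Some _, None => False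
  | Some A, Some B => arc_le A B
  end.
End Arch.

Definition is_initial_ordinal (I : Type) (lt : I -> I -> Prop) : Prop :=
  [/\ (forall i, ~ lt i i),
      (forall i j k, lt i j -> lt j k -> lt i k),
      (forall i j, [\/ lt i j, i = j | lt j i]),
      well_founded lt &
      (forall i, ~ card_le I {j : I | lt j i})].

Definition coinitial_family (S : Type) (le : S -> S -> Prop) (bot : S)
    (I : Type) (ltI : I -> I -> Prop) : Prop :=
  exists s : I -> S,
    [/\ (forall i, s i <> bot),
        (forall i j, ltI i j -> le (s j) (s i) /\ s j <> s i) &
        (forall t, t <> bot -> exists i, le (s i) t)].

Definition chi_is (S : Type) (le : S -> S -> Prop) (bot : S) (K : Type) : Prop :=
  (exists ltK : K -> K -> Prop,
     [/\ is_initial_ordinal ltK, inhabited K & coinitial_family le bot ltK])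
  /\ (forall (J : Type) (ltJ : J -> J -> Prop),
        is_initial_ordinal ltJ -> inhabited J ->
        coinitial_family le bot ltJ -> card_le K J).

Definition is_Gmetric (X : Type) (G : zmodType) (le : G -> G -> Prop)
    (d : X -> X -> G) : Prop :=
  [/\ (forall x y, d x y = 0 <-> x = y),
      (forall x y, le 0 (d x y)),
      (forall x y, d x y = d y x) &
      (forall x y z, le (d x z) (d x y + d y z))].

Definition in_Met (X : topologicalType) (G : zmodType) (le : G -> G -> Prop)
    (d : X -> X -> G) : Prop :=
  is_Gmetric le d /\
  (forall U : set X, open U <->
     (forall x, U x -> exists r, gpos le r /\
        (forall y, glt le (d x y) r -> U y))).

Definition in_MG (X : topologicalType) (K : Type) : Prop :=
  exists (G : zmodType) (le : G -> G -> Prop),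
    [/\ is_LOAG le,
        chi_is (@arc_bot_le G le) None K &
        exists d : X -> X -> G, in_Met le d].

Definition discrete_top (X : topologicalType) : Prop := forall U : set X, open U.

(* Suppose a point x is not isolated. For a G-metric of the topology, chi(Arc(G)^⊥) is at
   most the size of any family of radii whose balls around x separate x from all other points:
   bounding each radius below by a member of a coinitial family gives a coinitial subfamily,
   and the least well-ordered subfamily of this kind is indexed by an initial ordinal.
   Separating radii pass from one metric of the topology to another. If kappa = 1, Arc(G) has
   a least class [a], and radii r_n with n r_n <= a (found by halving, as x is not isolated)
   separate, so mu <= omega. If kappa >= omega, Arc(G) has no least class, so below each member
   of a coinitial family lies an infinitely smaller radius; these separate, so mu <= kappa. *)

From Stdlib Require Import Inverse_Image.
From mathcomp Require Import all_boot all_algebra.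
From mathcomp Require Import boolp classical_sets topology.
Set Implicit Arguments. Unset Strict Implicit. Unset Printing Implicit Defensive.
Import GRing.Theory.
Local Open Scope ring_scope.
Local Open Scope classical_set_scope.

Section OrderedGroup.
Variables (G : zmodType) (le : G -> G -> Prop).
Hypothesis HL : is_LOAG le.
Local Notation lt := (glt le).

Lemma gle_refl x : le x x. Proof. by case: HL => h _ _ _ _; apply: h. Qed.

Lemma gle_anti x y : le x y -> le y x -> x = y.
Proof. by case: HL => _ h _ _ _; apply: h. Qed.

Lemma gle_trans x y z : le x y -> le y z -> le x z.
Proof. by case: HL => _ _ h _ _; apply: h. Qed.

Lemma gle_total x y : le x y \/ le y x.
Proof. by case: HL => _ _ _ h _; apply: h. Qed.

Lemma gleD2r x y z : le x y -> le (x + z) (y + z).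
Proof. by case: HL => _ _ _ _ h; apply: h. Qed.

Lemma gleD x y z t : le x y -> le z t -> le (x + z) (y + t).
Proof.
move=> hxy hzt; apply: gle_trans (gleD2r z hxy) _.
by rewrite ![y + _]addrC; apply: gleD2r.
Qed.

Lemma gltW x y : lt x y -> le x y. Proof. by case. Qed.

Lemma gle_ltF x y : le x y -> lt y x -> False.
Proof. by move=> hxy [hyx /(_ (gle_anti hyx hxy))]. Qed.

Lemma gnle_lt x y : ~ le x y -> lt y x.
Proof.
move=> hxy; split; first by case: (gle_total x y).
by move=> eyx; apply: hxy; rewrite eyx; apply: gle_refl.
Qed.

Lemma gnlt_le x y : ~ lt x y -> le y x.
Proof. by move=> hxy; apply: contrapT => /gnle_lt. Qed.

Lemma gle_lt_trans x y z : le x y -> lt y z -> lt x z.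
Proof.
move=> hxy hyz; apply: gnle_lt => hzx.
exact: gle_ltF (gle_trans hzx hxy) hyz.
Qed.

Lemma gltD2r x y z : lt x y -> lt (x + z) (y + z).
Proof.
move=> hxy; apply: gnle_lt => /(gleD2r (- z)); rewrite !addrK => hyx.
exact: gle_ltF hyx hxy.
Qed.

Lemma gle_wMn2r n x y : le x y -> le (x *+ n) (y *+ n).
Proof.
move=> hxy; elim: n => [|n ih]; first by rewrite !mulr0n; apply: gle_refl.
by rewrite !mulrS; apply: gleD.
Qed.

Lemma glt_pMn2r n x y : (0 < n)%N -> lt x y -> lt (x *+ n) (y *+ n).
Proof.
case: n => // n _ hxy; elim: n => [|n ih]; first by rewrite !mulr1n.
rewrite mulrS (mulrS y); apply: gle_lt_trans (gleD2r _ (gltW hxy)) _.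
by rewrite ![y + _]addrC; apply: gltD2r.
Qed.

Lemma gle_wpMn2l x m n : le 0 x -> (m <= n)%N -> le (x *+ m) (x *+ n).
Proof.
move=> x_ge0 /subnKC <-; rewrite mulrnDr -{1}[x *+ m]addr0 ![x *+ m + _]addrC.
by apply: gleD2r; have := gle_wMn2r (n - m) x_ge0; rewrite mul0rn.
Qed.

(* [arc_le [x] [y]] holds iff [arch_le x y], see [arc_leP] and [arc_le_of]. *)
Definition arch_le x y := exists n, le x (y *+ n).

Lemma gle_arch_le x y : le x y -> arch_le x y.
Proof. by exists 1%N; rewrite mulr1n. Qed.

Lemma arch_le_trans x y z : arch_le x y -> arch_le y z -> arch_le x z.
Proof.
move=> [m hxy] [n hyz]; exists (n * m)%N.
by rewrite mulrnA; apply: gle_trans hxy (gle_wMn2r m hyz).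
Qed.

Lemma arch_ltP x y : ~ arch_le y x -> forall n, lt (x *+ n) y.
Proof. by move=> hyx n; apply: gnle_lt => hy; apply: hyx; exists n. Qed.

Lemma arch_le_total x y : arch_le x y \/ arch_le y x.
Proof.
case: (pselect (arch_le x y)) => [|/arch_ltP /(_ 1%N)]; first by left.
by rewrite mulr1n => /gltW /gle_arch_le; right.
Qed.

Lemma arch_le_gt0 x y n : gpos le x -> le x (y *+ n) -> (0 < n)%N.
Proof. by case: n => // x_gt0; rewrite mulr0n => /gle_ltF /(_ x_gt0). Qed.

Lemma asymp_arch_le x y : asymp le x y -> arch_le x y /\ arch_le y x.
Proof. by case=> n [m [_ _ hyx hxy]]; split; [exists m | exists n]. Qed.

Lemma asymp_refl x : asymp le x x.
Proof. by exists 1%N, 1%N; rewrite mulr1n; split => //; apply: gle_refl. Qed.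

Local Notation Arc := (Arc le).

Lemma arc_gt0 (A : Arc) x : sval A x -> gpos le x.
Proof. by case: A => /= _ [z [_ ->]] []. Qed.

Lemma arc_arch_le (A : Arc) x y : sval A x -> sval A y -> arch_le x y.
Proof.
case: A => /= _ [z [_ ->]] [_ /asymp_arch_le [_ hxz]] [_ /asymp_arch_le [hzy _]].
exact: arch_le_trans hxz hzy.
Qed.

Lemma arc_inhabited (A : Arc) : exists x, sval A x.
Proof.
by case: A => /= _ [z [z_gt0 ->]]; exists z; split => //; apply: asymp_refl.
Qed.

Definition arc_of x (x_gt0 : gpos le x) : Arc :=
  exist _ (fun y => gpos le y /\ asymp le x y) (ex_intro _ x (conj x_gt0 erefl)).

Lemma arc_of_self x (x_gt0 : gpos le x) : sval (arc_of x_gt0) x.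
Proof. by split => //; apply: asymp_refl. Qed.

Lemma arc_leP (A B : Arc) x y : arc_le A B -> sval A x -> sval B y -> arch_le x y.
Proof.
case=> x0 [y0 [Ax0 By0 hxy0]] Ax By.
have hxy0' : arch_le x0 y0.
  case: hxy0 => [/(_ 1%N)|/asymp_arch_le []//].
  by rewrite mulr1n => /gltW /gle_arch_le.
exact: arch_le_trans (arc_arch_le Ax Ax0) (arch_le_trans hxy0' (arc_arch_le By0 By)).
Qed.

Lemma arc_le_of (A B : Arc) x y : sval A x -> sval B y -> arch_le x y -> arc_le A B.
Proof.
move=> Ax By [m hxy]; exists x, y; split => //.
case: (pselect (arch_le y x)) => [[n hyx]|/arch_ltP]; last by left.
right; exists n, m; split => //; apply: arch_le_gt0; [exact: arc_gt0 By | exact: hyx |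
  exact: arc_gt0 Ax | exact: hxy].
Qed.

Lemma arc_ltP (A B : Arc) x y : ~ arc_le B A -> sval A x -> sval B y ->
  forall n, lt (x *+ n) y.
Proof. by move=> hBA Ax By; apply: arch_ltP => /(arc_le_of By Ax). Qed.

Lemma arc_le_total (A B : Arc) : arc_le A B \/ arc_le B A.
Proof.
have [x Ax] := arc_inhabited A; have [y By] := arc_inhabited B.
by case: (arch_le_total x y) => hxy; [left | right]; apply: arc_le_of hxy.
Qed.

Lemma arc_le_trans (A B C : Arc) : arc_le A B -> arc_le B C -> arc_le A C.
Proof.
move=> hAB hBC; have [x Ax] := arc_inhabited A.
have [y By] := arc_inhabited B; have [z Cz] := arc_inhabited C.
exact: arc_le_of Ax Cz (arch_le_trans (arc_leP hAB Ax By) (arc_leP hBC By Cz)).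
Qed.

Lemma arc_bot_le_total (a b : option Arc) : arc_bot_le a b \/ arc_bot_le b a.
Proof.
case: a => [A|]; case: b => [B|] /=; try by [left | right].
exact: arc_le_total.
Qed.

Lemma arc_bot_le_trans (a b c : option Arc) :
  arc_bot_le a b -> arc_bot_le b c -> arc_bot_le a c.
Proof. by case: a => [A|]; case: b => [B|]; case: c => [C|] //=; apply: arc_le_trans. Qed.
End OrderedGroup.

Definition well_order (W : Type) (lt : W -> W -> Prop) : Prop :=
  [/\ (forall i, ~ lt i i),
      (forall i j k, lt i j -> lt j k -> lt i k),
      (forall i j, [\/ lt i j, i = j | lt j i]) &
      well_founded lt].

Lemma initial_ordinal_well_order (W : Type) (lt : W -> W -> Prop) :
  is_initial_ordinal lt -> well_order lt.
Proof. by case. Qed.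

Definition ltsub (W : Type) (lt : W -> W -> Prop) (D : W -> Prop) (a b : {w | D w}) :=
  lt (sval a) (sval b).
Arguments ltsub {W} lt D.

Lemma sval_inj (W : Type) (D : W -> Prop) : injective (@sval W D).
Proof. by case=> a Da [b Db] /= eab; apply: eq_exist. Qed.

Lemma well_order_sub (W : Type) (lt : W -> W -> Prop) (D : W -> Prop) :
  well_order lt -> well_order (ltsub lt D).
Proof.
case=> irr tr tri wf; split; rewrite /ltsub.
- by move=> i; apply: irr.
- by move=> i j k; apply: tr.
- by move=> i j; case: (tri (sval i) (sval j)) => [|/sval_inj|] h;
    [apply: Or31 | apply: Or32 | apply: Or33].
- exact: wf_inverse_image.
Qed.

Lemma well_founded_min (W : Type) (lt : W -> W -> Prop) (P : W -> Prop) x :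
  well_founded lt -> P x -> exists y, P y /\ forall z, lt z y -> ~ P z.
Proof.
move=> wf Px; apply: contrapT => nmin; suff : forall y, ~ P y by move/(_ x).
apply: (well_founded_ind wf) => y ih Py; apply: nmin; exists y; split => //.
Qed.

Lemma card_le_trans (A B C : Type) : card_le A B -> card_le B C -> card_le A C.
Proof. by move=> [f f_inj] [g g_inj]; exists (g \o f) => x y /g_inj /f_inj. Qed.

Lemma card_le_sig (W : Type) (D : W -> Prop) : card_le {w | D w} W.
Proof. by exists sval; apply: sval_inj. Qed.

Lemma card_le_range (I J : Type) (f : I -> J) : card_le {j | exists i, f i = j} I.
Proof.
have [g gK] := choice (fun j : {j | exists i, f i = j} => svalP j).
by exists g => j k gjk; apply: sval_inj; rewrite -(gK j) -(gK k) gjk.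
Qed.

Lemma extend_along_inj (J W S : Type) (g : J -> W) (s : J -> S) (dflt : S) :
  injective g -> exists psi : W -> S, forall i, psi (g i) = s i.
Proof.
move=> g_inj.
exists (fun w => if pselect (exists i, g i = w) is left h then s (projT1 (cid h)) else dflt).
move=> i; case: pselect => [h|[]]; last by exists i.
by rewrite (g_inj _ _ (projT2 (cid h))).
Qed.

Section Coinitial.
Variables (S : Type) (le : S -> S -> Prop) (bot : S).
Hypothesis le_total : forall a b, le a b \/ le b a.
Hypothesis le_trans : forall a b c, le a b -> le b c -> le a c.

Section Records.
Variables (W : Type) (ltW : W -> W -> Prop).
Hypothesis ltW_wf : well_founded ltW.

Definition records (E : W -> Prop) (psi : W -> S) (w : W) : Prop :=
  E w /\ forall w', E w' -> ltW w' w -> le (psi w) (psi w') /\ psi w <> psi w'.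

Lemma coinitial_records (E : W -> Prop) (psi : W -> S) :
  (forall w, E w -> psi w <> bot) ->
  (forall t, t <> bot -> exists2 w, E w & le (psi w) t) ->
  coinitial_family le bot (ltsub ltW (records E psi)).
Proof.
move=> psi_bot psi_coinitial; exists (fun a => psi (sval a)); split.
- by move=> a; apply: psi_bot; case: (svalP a).
- by move=> a b ltab; apply: (svalP b).2 => //; case: (svalP a).
move=> t /psi_coinitial [w0 Ew0 hw0].
have [w [[Ew hw] wmin]] :=
  well_founded_min (P := fun w => E w /\ le (psi w) t) ltW_wf (conj Ew0 hw0).
have rec_w : records E psi w.
  split => // w' Ew' ltw'w.
  have nle : ~ le (psi w') t by move=> h; apply: wmin ltw'w _.
  have le_t : le t (psi w') by case: (le_total t (psi w')) => // /nle.
  by split; [apply: le_trans hw le_t | move=> e; apply: nle; rewrite -e].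
by exists (exist _ w rec_w).
Qed.

Definition coinitial_below (j : W) : Prop :=
  exists D : W -> Prop, (forall w, D w -> ltW w j) /\ coinitial_family le bot (ltsub ltW D).

(* Reindexing along [g] destroys monotonicity; passing to the records restores it. *)
Lemma coinitial_below_of_inj (J : Type) (s : J -> S) (g : J -> W) (j0 : W) :
  injective g -> (forall i, s i <> bot) ->
  (forall t, t <> bot -> exists i, le (s i) t) ->
  (forall i, ltW (g i) j0) -> coinitial_below j0.
Proof.
move=> g_inj s_bot s_coinitial g_lt.
have [psi psiE] := extend_along_inj s bot g_inj.
exists (records (fun w => exists i, g i = w) psi); split.
  by move=> w [[i <-] _]; apply: g_lt.
apply: coinitial_records => [w [i <-]|t /s_coinitial [i hi]]; rewrite ?psiE //.
by exists (g i); [exists i | rewrite psiE].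
Qed.
End Records.

Section Chi.
Variable K : Type.
Hypothesis chiK : chi_is le bot K.

Lemma chi_le_sub_initial (W : Type) (ltW : W -> W -> Prop) (D : W -> Prop) (t0 : S) :
  t0 <> bot -> well_order ltW -> coinitial_family le bot (ltsub ltW D) ->
  (forall w, D w -> ~ coinitial_below ltW w) -> card_le K {w | D w}.
Proof.
move=> t0_bot ltW_wo hD D_initial; have [_ _ _ ltW_wf] := ltW_wo.
have [s [s_bot _ s_coinitial]] := hD.
apply: (chiK.2 _ _ _ _ hD); last by have [i _] := s_coinitial t0 t0_bot; constructor.
have [irr tr tri wf] := well_order_sub D ltW_wo.
split => // i [e e_inj]; apply: (D_initial _ (svalP i)).
apply: (@coinitial_below_of_inj _ _ ltW_wf _ s (fun j => sval (sval (e j)))) => //.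
  by move=> j k /sval_inj /sval_inj /e_inj.
by move=> j; apply: (svalP (e j)).
Qed.

(* Taking the least [j] below which a coinitial subfamily lives makes that subfamily's
   index set an initial ordinal. *)
Lemma chi_le_well_order (W : Type) (ltW : W -> W -> Prop) (t0 : S) :
  t0 <> bot -> well_order ltW -> coinitial_family le bot ltW -> card_le K W.
Proof.
move=> t0_bot ltW_wo hW; have [_ _ _ ltW_wf] := ltW_wo.
case: (pselect (exists j, coinitial_below ltW j)) => [[j hj]|none_below].
  have [j0 [[D [D_lt hD]] j0_min]] := well_founded_min ltW_wf hj.
  apply: card_le_trans (card_le_sig D).
  by apply: chi_le_sub_initial t0_bot ltW_wo hD _ => w /D_lt; apply: j0_min.
apply: card_le_trans (card_le_sig (fun _ => True)).
apply: chi_le_sub_initial t0_bot ltW_wo _ (fun w _ h => none_below (ex_intro _ w h)).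
have [s [s_bot s_dec s_coinitial]] := hW.
exists (fun a => s (sval a)); split => [a|a b /s_dec|t /s_coinitial [i hi]] //.
by exists (exist _ i I).
Qed.
End Chi.
End Coinitial.

Lemma initial_ordinal_unit : is_initial_ordinal (fun _ _ : unit => False).
Proof.
split => //.
- by move=> _ [].
- by case; case; constructor 2.
- by move=> _ [f _]; case: (f tt).
Qed.

Section ArcChi.
Variables (G : zmodType) (le : G -> G -> Prop).

Lemma chi_least_arc (K : Type) : chi_is (@arc_bot_le _ le) None K -> card_le K unit ->
  exists A, forall B, @arc_le _ le A B.
Proof.
move=> [[ltK [_ [k0] [s [s_bot _ s_coinitial]]]] _] [f f_inj].
have k0E k : k = k0 by apply: f_inj; case: (f k); case: (f k0).
move: (s_bot k0); case s_k0 : (s k0) => [A|] // _; exists A => B.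
by have [k] := s_coinitial (Some B) ltac:(by []); rewrite (k0E k) s_k0.
Qed.

Lemma chi_no_least_arc (K : Type) : chi_is (@arc_bot_le _ le) None K -> card_le nat K ->
  forall A, exists B, ~ @arc_le _ le A B.
Proof.
move=> chiK natK A; apply/existsNP => A_least.
have [f f_inj] : card_le nat unit.
  apply: card_le_trans natK (chiK.2 _ _ initial_ordinal_unit (inhabits tt) _).
  exists (fun _ => Some A); split => // -[B|//] _; exists tt; exact: A_least.
by have := @f_inj 0%N 1%N; case: (f 0%N); case: (f 1%N) => /(_ erefl).
Qed.
End ArcChi.

Section GMetric.
Variables (X : Type) (G : zmodType) (le : G -> G -> Prop).
Hypothesis HL : is_LOAG le.
Variable d : X -> X -> G.
Hypothesis d_metric : is_Gmetric le d.

Definition non_isolated (x : X) : Prop :=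
  forall r, gpos le r -> exists y, y <> x /\ glt le (d x y) r.

Definition separating_radii (x : X) (I : Type) : Prop :=
  exists r : I -> G, (forall i, gpos le (r i)) /\
    forall y, y <> x -> exists i, ~ glt le (d x y) (r i).

Lemma dist_self x : d x x = 0.
Proof. by case: d_metric => d0 _ _ _; apply/d0. Qed.

Lemma dist_gt0 x y : y <> x -> gpos le (d x y).
Proof.
case: d_metric => d0 d_ge0 _ _ yx; split => // dxy0.
by apply: yx; symmetry; apply/d0; rewrite dxy0.
Qed.

Lemma non_isolated_half x r : non_isolated x -> gpos le r ->
  exists h, gpos le h /\ le (h + h) r.
Proof.
move=> x_ni r_gt0; have [y [yx hy]] := x_ni r r_gt0.
have p_gt0 := dist_gt0 yx; set p := d x y in p_gt0 hy *.
case: (pselect (le (p + p) r)) => [|/(gnle_lt HL) /gltW rpp]; first by exists p.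
have rp_le : le (r - p) p by have := gleD2r HL (- p) rpp; rewrite addrK.
exists (r - p); split; first by have := gltD2r HL (- p) hy; rewrite subrr.
by have := gleD HL rp_le (gle_refl HL (r - p)); rewrite [p + _]addrC subrK.
Qed.

Lemma non_isolated_small x r n : non_isolated x -> gpos le r ->
  exists h, gpos le h /\ le (h *+ n) r.
Proof.
move=> x_ni r_gt0.
have pow2 k : exists h, gpos le h /\ le (h *+ (2 ^ k)%N) r.
  elim: k => [|k [h [h_gt0 hr]]].
    by exists r; rewrite expn0 mulr1n; split => //; apply: gle_refl.
  have [h' [h'_gt0 hh']] := non_isolated_half x_ni h_gt0.
  exists h'; split => //; rewrite expnS mulrnA.
  by rewrite -mulr2n in hh'; exact: (gle_trans HL (gle_wMn2r HL (2 ^ k) hh') hr).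
have [h [h_gt0 hr]] := pow2 n; exists h; split => //.
apply: (gle_trans HL (gle_wpMn2l HL (gltW h_gt0) (ltnW (ltn_expl n (ltnSn 1)))) hr).
Qed.

Lemma least_arc_separating_radii x (A : Arc le) :
  non_isolated x -> (forall B, arc_le A B) -> separating_radii x nat.
Proof.
move=> x_ni A_least; have [a Aa] := arc_inhabited HL A.
have [r hr] := choice (fun n => non_isolated_small n x_ni (arc_gt0 Aa)).
exists r; split => [n|y yx]; first by case: (hr n).
have d_gt0 := dist_gt0 yx.
have [m hm] := arc_leP HL (A_least (arc_of d_gt0)) Aa (arc_of_self HL d_gt0).
exists m.+1 => hlt; apply: (gle_ltF HL _ (glt_pMn2r HL (ltn0Sn m) hlt)).
apply: (gle_trans HL (hr m.+1).2 (gle_trans HL hm _)).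
exact: (gle_wpMn2l HL (gltW d_gt0) (leqnSn m)).
Qed.

Lemma coinitial_separating_radii x (K : Type) (ltK : K -> K -> Prop) :
  coinitial_family (@arc_bot_le _ le) None ltK ->
  (forall A, exists B, ~ @arc_le _ le A B) -> separating_radii x K.
Proof.
move=> [s [s_bot _ s_coinitial]] no_least.
have below k : exists r, gpos le r /\
    forall A, s k = Some A -> forall q, sval A q -> forall n, glt le (r *+ n) q.
  move: (s_bot k); case: (s k) => [A _|//].
  have [B hB] := no_least A; have [b Bb] := arc_inhabited HL B.
  exists b; split => [|_ [<-] q Aq]; first exact: arc_gt0 Bb.
  exact: (arc_ltP HL hB Bb Aq).
have [r hr] := choice below.
exists r; split => [k|y yx]; first by case: (hr k).
have d_gt0 := dist_gt0 yx.
have [k hk] := s_coinitial (Some (arc_of d_gt0)) ltac:(by []).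
exists k => hlt; move: hk (hr k).2 (s_bot k).
case: (s k) => [A hA /(_ A erefl) r_below _|//].
have [q Aq] := arc_inhabited HL A.
have [m hm] := arc_leP HL hA Aq (arc_of_self HL d_gt0).
exact: (gle_ltF HL (gle_trans HL hm (gle_wMn2r HL m (gltW hlt))) (r_below q Aq m)).
Qed.

Lemma chi_le_separating_radii x (M I : Type) :
  chi_is (@arc_bot_le _ le) None M -> non_isolated x -> separating_radii x I ->
  card_le M I.
Proof.
move=> chiM x_ni [r [r_gt0 r_sep]].
have [[ltM [M_init [m0] [u [u_bot u_dec u_coinitial]]]] _] := chiM.
have [b hb] := choice (fun i => u_coinitial (Some (arc_of (r_gt0 i))) ltac:(by [])).
apply: card_le_trans (card_le_range b).
pose D m := exists i, b i = m.
apply: (@chi_le_well_order _ _ _ (arc_bot_le_total HL) (arc_bot_le_trans HL) _ chiM _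
  (ltsub ltM D) _ (u_bot m0)); first exact: well_order_sub (initial_ordinal_well_order M_init).
exists (fun c => u (sval c)); split => [c|c c'|[A|//] _]; [exact: u_bot | exact: u_dec |].
have [a Aa] := arc_inhabited HL A.
have [y [yx hya]] := x_ni a (arc_gt0 Aa).
have [i hi] := r_sep y yx.
exists (exist _ (b i) (ex_intro _ i erefl)) => /=.
move: (hb i) (u_bot (b i)); case: (u (b i)) => [U hU _|//] /=.
apply: (arc_le_trans HL hU (arc_le_of HL (arc_of_self HL (r_gt0 i)) Aa _)).
exact/gle_arch_le/(gle_trans HL (gnlt_le HL hi) (gltW hya)).
Qed.
End GMetric.

Section Topology.
Variables (X : topologicalType) (G : zmodType) (le : G -> G -> Prop).
Hypothesis HL : is_LOAG le.
Variable d : X -> X -> G.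
Hypothesis d_top : in_Met le d.

Lemma ball_open x r : open [set y | glt le (d x y) r].
Proof.
have [[_ _ _ d_tri] d_open] := d_top.
apply/d_open => y hy; exists (r - d x y); split.
  by have := gltD2r HL (- d x y) hy; rewrite subrr.
move=> z hz; apply: (gle_lt_trans HL (d_tri x y z)).
by have := gltD2r HL (d x y) hz; rewrite subrK [d y z + _]addrC.
Qed.

Lemma non_isolated_of_not_open x : ~ open [set x] -> non_isolated le d x.
Proof.
move=> x_not_open r r_gt0; apply: contrapT => hx; apply: x_not_open.
apply/d_top.2 => _ ->; exists r; split => // y hy.
by apply: contrapT => yx; apply: hx; exists y.
Qed.

Lemma separating_radii_transfer (G' : zmodType) (le' : G' -> G' -> Prop)
    (d' : X -> X -> G') x (I : Type) :
  in_Met le' d' -> separating_radii le d x I -> separating_radii le' d' x I.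
Proof.
move=> d'_top [r [r_gt0 r_sep]].
have ball_in i : exists r', gpos le' r' /\
    forall y, glt le' (d' x y) r' -> glt le (d x y) (r i).
  apply: ((d'_top.2 _).1 (ball_open x (r i)) x).
  by rewrite /= (dist_self d_top.1); apply: r_gt0.
have [r' hr'] := choice ball_in.
exists r'; split => [i|y /r_sep [i hi]]; first by case: (hr' i).
by exists i => /(hr' i).2.
Qed.
End Topology.

Lemma discrete_of_open_set1 (X : topologicalType) :
  (forall x : X, open [set x]) -> discrete_top X.
Proof.
by move=> set1_open U; rewrite -[U]image_id -bigcup_imset1; apply: bigcup_open.
Qed.

Theorem proposition2p49 (X : topologicalType) (K M : Type) :
  in_MG X K -> in_MG X M -> card_lt K M ->
  ((card_eq K unit /\ card_lt nat M) \/ card_le nat K) ->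
  discrete_top X.
Proof.
move=> [GK [leK [HLK chiK [dK dK_top]]]] [GM [leM [HLM chiM [dM dM_top]]]] [_ MK] hK.
apply: discrete_of_open_set1 => x; apply: contrapT => x_not_open.
have niK := non_isolated_of_not_open dK_top x_not_open.
have niM := non_isolated_of_not_open dM_top x_not_open.
have M_le I : separating_radii leK dK x I -> card_le M I.
  move=> /(separating_radii_transfer HLK dK_top dM_top).
  exact: (chi_le_separating_radii HLM chiM niM).
case: hK => [[[f [g fK _]] [_ Mnat]]|natK].
- have [A A_least] := chi_least_arc chiK (ex_intro _ f (can_inj fK)).
  exact/Mnat/M_le/(least_arc_separating_radii HLK dK_top.1 niK A_least).
- have [[ltK [_ _ s_coinitial]] _] := chiK.
  apply/MK/M_le/(coinitial_separating_radii HLK dK_top.1 x s_coinitial).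
  exact: (chi_no_least_arc chiK natK).
Qed.
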